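(* Let $K\ge 2$ be even, $a,b\ge1$ integers, $M\ge0$. For the $(K,a,b)$ coded caching problem for location-based content, $R^\star\ge \dfrac{K}{2}-\dfrac{K}{2(2a+b)}M$.
   Context: For integers $x\le y$, $[x:y]=\{x,x+1,\dots,y\}$ and $[n]=[1:n]$. For integers $c$ and $m\ge1$, $\langle c\rangle_m$ denotes the unique element of $\{1,\dots,m\}$ congruent to $c$ modulo $m$. The $(K,a,b)$ coded caching problem for location-based content: a server has $N=K(a+b)$ files $W_1,\dots,W_N$, each consisting of $B$ independent uniformly distributed bits. There are $K$ cache nodes, each storing $MB$ bits, and $K$ users, user $k$ having free access to cache node $k$ only. For $k\in[K]$ define $\mathcal D_{k,1}=[(k-1)(a+b)+1:ka+(k-1)b]$, $\mathcal D_{k,2}=[ka+(k-1)b+1:k(a+b)]$, $\mathcal D_{k,3}=\mathcal D_{\langle k+1\rangle_K,1}$, and $\mathcal D_k=\mathcal D_{k,1}\cup\mathcal D_{k,2}\cup\mathcal D_{k,3}$. A scheme consists of: placement functions $Z_k=\phi_k(W_1,\dots,W_N)\in\{0,1\}^{MB}$, chosen without knowledge of demands; for every demand vector $\mathbf d=(d_1,\dots,d_K)\in\mathcal D_1\times\cdots\times\mathcal D_K$, a transmitted message $X=\psi(\mathbf d,W_1,\dots,W_N)\in\{0,1\}^{RB}$; and decoding functions such that user $k$ recovers $W_{d_k}$ exactly from $(\mathbf d,Z_k,X)$ for every $\mathbf d$ and $k$. $R$ is the worst-case load and $R^\star$ is the infimum of $R$ over all schemes (and all $B$). *)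

From HB Require Import structures.
From mathcomp Require Import all_boot all_order all_algebra.
From mathcomp Require Import classical_sets reals.
Set Implicit Arguments. Unset Strict Implicit. Unset Printing Implicit Defensive.
Import Order.TTheory GRing.Theory Num.Theory.

(* File indices are 1-based naturals as in the paper: file n in [1:N].
   In Rocq, file i : 'I_N stands for W_{i+1}; user k : 'I_K stands for user k+1. *)

Definition Dk1 (a b k : nat) : pred nat :=
  fun n => ((k - 1) * (a + b) + 1 <= n) && (n <= k * a + (k - 1) * b).
Definition Dk2 (a b k : nat) : pred nat :=
  fun n => (k * a + (k - 1) * b + 1 <= n) && (n <= k * (a + b)).
(* <c>_m : the unique element of {1..m} congruent to c mod m (for c >= 1) *)
Definition modrep (m c : nat) : nat := (c - 1) %% m + 1.
Definition Dk3 (K a b k : nat) : pred nat := Dk1 a b (modrep K (k + 1)).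
Definition Dk (K a b k : nat) : pred nat :=
  fun n => [|| Dk1 a b k n, Dk2 a b k n | Dk3 K a b k n].

Definition library (K a b B : nat) := {ffun 'I_(K * (a + b)) -> {ffun 'I_B -> bool}}.
Definition demand (K a b : nat) := {ffun 'I_K -> 'I_(K * (a + b))}.

Definition admissible (K a b : nat) (d : demand K a b) : Prop :=
  forall k : 'I_K, Dk K a b k.+1 (d k).+1.

Definition has_scheme (K a b B C L : nat) : Prop :=
  exists (phi : 'I_K -> library K a b B -> {ffun 'I_C -> bool})
         (psi : demand K a b -> library K a b B -> {ffun 'I_L -> bool})
         (mu : 'I_K -> demand K a b -> {ffun 'I_C -> bool} ->
               {ffun 'I_L -> bool} -> {ffun 'I_B -> bool}),
    forall d : demand K a b, admissible d ->
    forall (W : library K a b B) (k : 'I_K),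
      mu k d (phi k W) (psi d W) = W (d k).

Local Open Scope ring_scope.
Local Open Scope classical_set_scope.

Definition achievable_loads (R : realType) (K a b : nat) (M : R) : set R :=
  [set r | exists B C L : nat, (0 < B)%N /\ (C%:R <= M * B%:R) /\
           has_scheme K a b B C L /\ r = L%:R / B%:R].

Definition Rstar (R : realType) (K a b : nat) (M : R) : R :=
  inf (achievable_loads K a b M).

From HB Require Import structures.
From mathcomp Require Import all_boot all_order all_algebra.
From mathcomp Require Import classical_sets reals.
From mathcomp Require Import zify ring lra.
Import Order.TTheory GRing.Theory Num.Theory.

(* Pair the users as (1,2), (3,4), ...: the odd-numbered user 2i+1 may request
   any of the 2a+b consecutive files  2i(a+b)+1, ..., 2i(a+b)+2a+b, which cover
   D_{2i+1,1}, D_{2i+1,2} and D_{2i+2,1} = D_{2i+1,3}.  For each j < 2a+b let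
   demand j ask user 2i+1 for file 2i(a+b)+j+1 (and every even-numbered user
   for some fixed admissible file).  The K/2 caches of the odd users together
   with the 2a+b messages sent for these demands determine all (K/2)(2a+b)
   files involved, so a counting (pigeonhole) argument gives
        B (K/2)(2a+b) <= C (K/2) + L (2a+b),
   whence L/B >= K/2 - (K/2) M/(2a+b) whenever C <= M B.  Since some scheme
   exists (send every file uncoded), the bound passes to the infimum R^*. *)

Lemma cut_set_count (T : Type) (I J : finType) (B C L : nat)
    (phi : I -> T -> {ffun 'I_C -> bool}) (psi : J -> T -> {ffun 'I_L -> bool})
    (E : {ffun I * J -> {ffun 'I_B -> bool}} -> T)
    (dec : I -> J -> {ffun 'I_C -> bool} -> {ffun 'I_L -> bool} ->
           {ffun 'I_B -> bool}) :
  (forall g i j, dec i j (phi i (E g)) (psi j (E g)) = g (i, j)) ->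
  (B * (#|I| * #|J|) <= C * #|I| + L * #|J|)%N.
Proof.
move=> decE.
pose F g := (([ffun i => phi i (E g)] : {ffun I -> {ffun 'I_C -> bool}}),
             ([ffun j => psi j (E g)] : {ffun J -> {ffun 'I_L -> bool}})).
have F_inj : injective F.
  move=> g g' [ephi epsi]; apply/ffunP => -[i j].
  rewrite -decE -(decE g').
  have := congr1 (fun f : {ffun I -> _} => f i) ephi.
  have := congr1 (fun f : {ffun J -> _} => f j) epsi.
  by rewrite /= !ffunE => -> ->.
have := leq_card F F_inj.
rewrite card_prod !card_ffun !card_bool card_prod !card_ord -!expnM -expnD.
by rewrite leq_exp2l.
Qed.

Lemma first_file_admissible (K a b k : nat) :
  (1 <= a)%N -> Dk K a b k.+1 (k * (a + b)).+1.
Proof.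
move=> a1; apply/orP; left; rewrite /Dk1 subn1 /=; apply/andP; split; nia.
Qed.

(* If user k+1 is not the last one, the 2a+b files following (k)(a+b) form
   D_{k+1,1} u D_{k+1,2} u D_{k+2,1}, all admissible for user k+1. *)
Lemma window_file_admissible (K a b k j : nat) :
  (k.+1 < K)%N -> (j < 2 * a + b)%N -> Dk K a b k.+1 (k * (a + b) + j).+1.
Proof.
move=> kK jn; rewrite /Dk /Dk1 /Dk2 /Dk3 /modrep subn1 /=.
case: (ltnP j a) => ja.
  by apply/orP; left; apply/andP; split; nia.
case: (ltnP j (a + b)) => jab.
  by apply/orP; right; apply/orP; left; apply/andP; split; nia.
apply/orP; right; apply/orP; right.
rewrite addn1 subn1 /= modn_small ?addn1 //.
apply/andP; split; nia.
Qed.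

Lemma even_index_not_last (K k : nat) :
  ~~ odd K -> ~~ odd k -> (k < K)%N -> (k.+1 < K)%N.
Proof.
move=> evK evk kK; rewrite ltn_neqAle kK andbT; apply/negP => /eqP eK.
by move: evK; rewrite -eK /= evk.
Qed.

Definition test_file (a b k j : nat) : nat :=
  (k * (a + b) + (if odd k then 0 else j))%N.

Lemma test_file_lt (K a b k j : nat) :
  ~~ odd K -> (k < K)%N -> (j < 2 * a + b)%N -> (test_file a b k j < K * (a + b))%N.
Proof.
move=> evK kK jn; rewrite /test_file.
case: (boolP (odd k)) => /= oddk; first nia.
have := @even_index_not_last _ _ evK oddk kK; nia.
Qed.

Lemma test_file_admissible (K a b k j : nat) :
  ~~ odd K -> (1 <= a)%N -> (k < K)%N -> (j < 2 * a + b)%N ->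
  Dk K a b k.+1 (test_file a b k j).+1.
Proof.
move=> evK a1 kK jn; rewrite /test_file.
case: (boolP (odd k)) => oddk; first by rewrite addn0 first_file_admissible.
exact/window_file_admissible/jn/(@even_index_not_last _ _ evK oddk kK).
Qed.

Lemma scheme_count_bound (K a b B C L : nat) :
  ~~ odd K -> (1 <= a)%N -> has_scheme K a b B C L ->
  (B * (K./2 * (2 * a + b)) <= C * K./2 + L * (2 * a + b))%N.
Proof.
move=> evK a1 [phi [psi [mu decode]]].
have userP (i : 'I_K./2) : (2 * i < K)%N.
  by have := ltn_ord i; rewrite -[in X in (_ < X)%N](odd_double_half K) (negbTE evK); lia.
pose user (i : 'I_K./2) : 'I_K := Ordinal (userP i).
pose demand_of (j : 'I_(2 * a + b)) : demand K a b :=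
  [ffun k : 'I_K => Ordinal (@test_file_lt K a b k j evK (ltn_ord k) (ltn_ord j))].
have demand_adm (j : 'I_(2 * a + b)) : admissible (demand_of j).
  by move=> k; rewrite ffunE; exact: test_file_admissible.
(* File 2i(a+b)+j holds g (i, j); the other files are irrelevant. *)
pose lib_of (g : {ffun 'I_K./2 * 'I_(2 * a + b) -> {ffun 'I_B -> bool}}) :
    library K a b B :=
  [ffun f : 'I_(K * (a + b)) =>
     match insub (f %/ (2 * (a + b)))%N, insub (f %% (2 * (a + b)))%N with
     | Some i, Some j => g (i, j)
     | _, _ => [ffun _ => false]
     end].
have := @cut_set_count (library K a b B) 'I_K./2 'I_(2 * a + b) B C L
  (fun i => phi (user i)) (fun j => psi (demand_of j)) lib_of
  (fun i j => mu (user i) (demand_of j)).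
rewrite !card_ord; apply => g i j.
rewrite decode // !ffunE /= /test_file oddM /=.
have jlt : (j < 2 * (a + b))%N by have := ltn_ord j; lia.
have -> : (2 * i * (a + b) + j = i * (2 * (a + b)) + j)%N by rewrite mulnA (mulnC 2).
rewrite divnMDl; last lia.
by rewrite modnMDl divn_small // modn_small // addn0 !valK.
Qed.

Local Open Scope ring_scope.

Lemma load_lower_bound (R : realType) (h n B C L : nat) (M : R) :
  (0 < B)%N -> (0 < n)%N -> C%:R <= M * B%:R ->
  (B * (h * n) <= C * h + L * n)%N ->
  h%:R - h%:R / n%:R * M <= L%:R / B%:R.
Proof.
move=> B0 n0 CM count.
have Bpos : (0 : R) < B%:R by rewrite ltr0n.
have npos : (0 : R) < n%:R by rewrite ltr0n.
have countR : B%:R * (h%:R * n%:R) <= C%:R * h%:R + L%:R * n%:R :> R.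
  by rewrite -!natrM -natrD ler_nat.
have hC : h%:R * C%:R <= h%:R * (M * B%:R) by apply: ler_wpM2l.
rewrite ler_pdivlMr // -[_ * B%:R](mulfK (lt0r_neq0 npos)) ler_pdivrMr //.
have -> : (h%:R - h%:R / n%:R * M) * B%:R * n%:R =
          h%:R * n%:R * B%:R - h%:R * M * B%:R :> R.
  by field; rewrite lt0r_neq0.
nra.
Qed.

Lemma uncoded_load_achievable (R : realType) (K a b : nat) (M : R) :
  0 <= M -> achievable_loads K a b M ((K * (a + b))%:R / 1%:R).
Proof.
move=> M0; exists 1%N, 0%N, (K * (a + b))%N; do 3?split => //.
  by rewrite mulr1.
exists (fun _ _ => [ffun _ => false]),
       (fun _ (W : library K a b 1) =>
          [ffun f => W f ord0] : {ffun 'I_(K * (a + b)) -> bool}),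
       (fun k d _ x => [ffun _ => x (d k)]).
by move=> d _ W k; apply/ffunP => t; rewrite !ffunE (ord1 t).
Qed.

Theorem mainTheorem4 (R : realType) (K a b : nat) (M : R) :
  (2 <= K)%N -> ~~ odd K -> (1 <= a)%N -> (1 <= b)%N -> 0 <= M ->
  K%:R / 2 - K%:R / (2 * (2 * a + b)%:R) * M <= Rstar K a b M.
Proof.
move=> K2 evK a1 b1 M0.
have halfK : K%:R / 2 = (K./2)%:R :> R.
  rewrite -[in LHS](odd_double_half K) (negbTE evK) add0n -muln2 natrM.
  by rewrite mulfK // lt0r_neq0.
have -> : K%:R / 2 - K%:R / (2 * (2 * a + b)%:R) * M =
          (K./2)%:R - (K./2)%:R / (2 * a + b)%:R * M :> R.
  by rewrite -halfK invfM mulrA.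
apply: lb_le_inf; first by eexists; exact: uncoded_load_achievable.
move=> _ [B [C [L [B0 [CM [scheme ->]]]]]].
apply: (@load_lower_bound R _ _ B C L M B0 _ CM); first lia.
exact: scheme_count_bound.
Qed.
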